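(* Let $\gamma_{ab}(q)$ be a metric and $E_0\neq0$ a fixed constant, and consider the geodesic equations $\ddot q^a+\Gamma^a_{bc}\dot q^b\dot q^c=0$ subject to $\gamma_{ab}\dot q^a\dot q^b=2E_0$. Then each of the following is a first integral of this constrained system: Integral 1. For $\ell\ge0$, $$I_{(\ell)1}=\Big(-\sum_{k=1}^{\ell}\frac{t^{2k}}{2k}L_{(2k-1)(a;b)}+C_{(0)ab}\Big)\dot q^a\dot q^b+\sum_{k=1}^{\ell}t^{2k-1}L_{(2k-1)a}\dot q^a+G(q),$$ where (if $\ell\ge1$) $L_{(2\ell-1)(a;b)}$ is a Killing tensor, $C_{(0)ab}$ is a second order CKT with associated vector $X_{(0)a}$, for $k=1,\dots,\ell-1$ each $L_{(2k-1)(a;b)}$ is a second order CKT with associated vector $Y_{(2k-1)a}=\frac{k(2k+1)}{E_0}L_{(2k+1)a}$, and $G_{,a}=-2E_0X_{(0)a}-L_{(1)a}$, the term $L_{(1)a}$ being present only if $\ell>0$. Integral 2. For $\ell\ge0$, $$I_{(\ell)2}=\sum_{k=0}^{\ell}\Big(-\frac{t^{2k+1}}{2k+1}L_{(2k)(a;b)}\dot q^a\dot q^b+t^{2k}L_{(2k)a}\dot q^a\Big),$$ where $L_{(2\ell)(a;b)}$ is a Killing tensor and, for $k=0,\dots,\ell-1$, $L_{(2k)(a;b)}$ is a second order CKT with associated vector $Y_{(2k)a}=\frac{(k+1)(2k+1)}{E_0}L_{(2k+2)a}$. Integral 3. For a constant $\lambda\ne0$, $$I_{(e)}=e^{\lambda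 t}\big(-L_{(a;b)}\dot q^a\dot q^b+\lambda L_a\dot q^a\big),$$ where $L_{(a;b)}$ is a second order CKT with associated vector $Y_a=\frac{\lambda^2}{2E_0}L_a$.
   Context: $\Gamma^a_{bc}$ are the Levi-Civita connection coefficients of $\gamma_{ab}$; comma = partial derivative, semicolon = covariant derivative, dot = $d/dt$; round brackets denote symmetrization with weight $1/N!$. A first integral of the constrained system is a function $I(t,q,\dot q)$ with $dI/dt=0$ along every geodesic with $\gamma_{ab}\dot q^a\dot q^b=2E_0$. A symmetric tensor $U_{ab}$ is a second order conformal Killing tensor (CKT) with associated vector $u_a$ if $U_{(ab;c)}=u_{(a}\gamma_{bc)}$; it is a Killing tensor if $u_a=0$. *)

From HB Require Import structures.
From mathcomp Require Import all_boot all_order all_algebra.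
From mathcomp Require Import all_classical all_reals all_analysis.
Set Implicit Arguments. Unset Strict Implicit. Unset Printing Implicit Defensive.
Import Order.TTheory GRing.Theory Num.Theory.
Import numFieldNormedType.Exports.
Local Open Scope classical_set_scope.
Local Open Scope ring_scope.

Section Defs.
Variables (R : realType) (n : nat).

Definition vec := 'rV[R]_n.
Definition sfield := vec -> R.
Definition covfield := 'I_n -> vec -> R.
Definition tfield := 'I_n -> 'I_n -> vec -> R.

Definition ecoord (i : 'I_n) : vec := delta_mx 0 i.

Definition partial (f : sfield) (i : 'I_n) : sfield := fun q => derive f q (ecoord i).

Fixpoint CkOn (D : set vec) (k : nat) (f : sfield) : Prop :=
  match k with
  | 0 => forall q, D q -> {for q, continuous f}
  | k.+1 => (forall q, D q -> differentiable f q) /\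
            forall i, CkOn D k (partial f i)
  end.

Definition smoothOn (D : set vec) (f : sfield) := forall k, CkOn D k f.

Definition gmx (g : tfield) (q : vec) : 'M[R]_n := \matrix_(i, j) g i j q.
Definition ginv (g : tfield) (q : vec) : 'M[R]_n := invmx (gmx g q).

Definition metricOn (D : set vec) (g : tfield) : Prop :=
  open D /\
  (forall i j q, D q -> g i j q = g j i q) /\
  (forall q, D q -> \det (gmx g q) != 0) /\
  (forall i j, smoothOn D (g i j)).

Definition Gamma (g : tfield) (a b c : 'I_n) (q : vec) : R :=
  2^-1 * \sum_(d < n) ginv g q a d *
     (partial (g d c) b q + partial (g d b) c q - partial (g b c) d q).

Definition covD1 (g : tfield) (L : covfield) (a b : 'I_n) (q : vec) : R :=
  partial (L a) b q - \sum_(c < n) Gamma g c a b q * L c q.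

Definition symD (g : tfield) (L : covfield) : tfield :=
  fun a b q => 2^-1 * (covD1 g L a b q + covD1 g L b a q).

Definition covD2 (g : tfield) (U : tfield) (a b c : 'I_n) (q : vec) : R :=
  partial (U a b) c q - \sum_(d < n) Gamma g d c a q * U d b q
                      - \sum_(d < n) Gamma g d c b q * U a d q.

Definition sym3 (T : 'I_n -> 'I_n -> 'I_n -> vec -> R) (a b c : 'I_n) (q : vec) : R :=
  6^-1 * (T a b c q + T a c b q + T b a c q + T b c a q + T c a b q + T c b a q).

Definition CKT (D : set vec) (g : tfield) (U : tfield) (u : covfield) : Prop :=
  (forall a b q, D q -> U a b q = U b a q) /\
  (forall a b c q, D q ->
     sym3 (covD2 g U) a b c q = sym3 (fun a b c q => u a q * g b c q) a b c q).

Definition KT (D : set vec) (g : tfield) (U : tfield) : Prop :=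
  CKT D g U (fun _ _ => 0).

Definition velocity (x : R -> vec) : R -> vec := derive1 x.

Definition constrained_geodesic (D : set vec) (g : tfield) (E0 : R)
    (x : R -> vec) (t0 t1 : R) : Prop :=
  forall t, t0 < t < t1 ->
    [/\ D (x t), derivable x t 1, derivable (velocity x) t 1,
        (forall a : 'I_n, derive1 (velocity x) t 0 a +
           \sum_(b < n) \sum_(c < n)
              Gamma g a b c (x t) * velocity x t 0 b * velocity x t 0 c = 0) &
        \sum_(a < n) \sum_(b < n) g a b (x t) * velocity x t 0 a * velocity x t 0 b
          = 2 * E0].

Definition first_integral (D : set vec) (g : tfield) (E0 : R)
    (I : R -> vec -> vec -> R) : Prop :=
  forall (x : R -> vec) (t0 t1 : R), constrained_geodesic D g E0 x t0 t1 ->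
    forall t, t0 < t < t1 ->
      derivable (fun s => I s (x s) (velocity x s)) t 1 /\
      derive1 (fun s => I s (x s) (velocity x s)) t = 0.

Definition quadv (U : tfield) (q v : vec) : R :=
  \sum_(a < n) \sum_(b < n) U a b q * v 0 a * v 0 b.
Definition linv (L : covfield) (q v : vec) : R :=
  \sum_(a < n) L a q * v 0 a.

(* The three integrals.  L k is the covector field L_{(k)a}. *)
Definition I1 (g : tfield) (l : nat) (L : nat -> covfield) (C0 : tfield) (G : sfield)
    (t : R) (q v : vec) : R :=
  \sum_(a < n) \sum_(b < n)
     (- (\sum_(1 <= k < l.+1) t ^+ (2 * k) / (2 * k)%:R * symD g (L (2 * k).-1) a b q)
      + C0 a b q) * v 0 a * v 0 b
  + \sum_(1 <= k < l.+1) t ^+ (2 * k).-1 * linv (L (2 * k).-1) q v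
  + G q.

Definition I2 (g : tfield) (l : nat) (L : nat -> covfield) (t : R) (q v : vec) : R :=
  \sum_(0 <= k < l.+1)
     (- (t ^+ (2 * k).+1 / (2 * k).+1%:R) * quadv (symD g (L (2 * k))) q v
      + t ^+ (2 * k) * linv (L (2 * k)) q v).

Definition Iexp (g : tfield) (lam : R) (L : covfield) (t : R) (q v : vec) : R :=
  expR (lam * t) * (- quadv (symD g L) q v + lam * linv L q v).

End Defs.

(* Along a geodesic with g(qdot, qdot) = 2 E0, the time derivative of L_a qdot^a is
   L_(a;b) qdot^a qdot^b, and that of U_ab qdot^a qdot^b is U_(ab;c) qdot^a qdot^b qdot^c,
   which for a conformal Killing tensor with associated vector u equals
   (u_a qdot^a) g(qdot, qdot) = 2 E0 u_a qdot^a.  Hence the building block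
   - t^(j+1)/(j+1) L_(a;b) qdot^a qdot^b + t^j L_a qdot^a has derivative
   j t^(j-1) L_a qdot^a - 2 E0 t^(j+1)/(j+1) Y_a qdot^a.  With the prescribed associated
   vectors Y_(j) = (j+1)(j+2)/(2 E0) L_(j+2) this is beta_j - beta_(j+2), where
   beta_j = j t^(j-1) L_(j)a qdot^a, so the derivatives of Integrals 1 and 2 telescope;
   the Killing tensor closes the ladder, beta_0 = 0, and in Integral 1 the remaining
   beta_1 = L_(1)a qdot^a is cancelled by the derivatives of C_(0) qdot qdot and G.
   For Integral 3 the factor e^(lam t) does the same job in a single step. *)

From HB Require Import structures.
From mathcomp Require Import all_boot all_order all_algebra.
From mathcomp Require Import all_classical all_reals all_analysis.
From mathcomp Require Import ring zify.
Import Order.TTheory GRing.Theory Num.Theory.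
Import numFieldNormedType.Exports.
Local Open Scope classical_set_scope.
Local Open Scope ring_scope.
Set Implicit Arguments. Unset Strict Implicit.

Lemma near_eq_differentiable (R : numFieldType) (V W : normedModType R)
    (f h : V -> W) (x : V) :
  {near x, f =1 h} -> differentiable h x -> differentiable f x.
Proof.
move=> fh dh.
have fhx : f x = h x by exact: nbhs_singleton fh.
have fh0 : \forall k \near 0, f (k + x) = h (k + x).
  by move: fh; rewrite (near_shift 0 x) /= subr0.
have expand : f \o shift x = cst (f x) + 'd h x +o_ 0 id.
  apply/eqaddoP => _/posnumP[e]; have /eqaddoP /(_ e%:num) := diff_locally dh.
  move=> /(_ [elaborate gt0 e]) hE; near=> k; rewrite fhx !fctE /= (near fh0) //.
  by near: k; apply: filterS hE => k; rewrite !fctE.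
have dfh := diff_unique (diff_continuous dh) expand.
by apply/diff_locallyP; rewrite dfh; split => //; exact: diff_continuous.
Unshelve. all: by end_near. Qed.

Lemma differentiable_big (R : numFieldType) (V W : normedModType R)
    (I : Type) (r : seq I) (P : pred I) (F : I -> V -> W) (x : V) :
  (forall i, P i -> differentiable (F i) x) ->
  differentiable (fun y => \sum_(i <- r | P i) F i y) x.
Proof.
move=> dF; rewrite -fct_sumE; elim/big_ind: _ => //.
by move=> f h df dh; apply: differentiableD.
Qed.

Lemma differentiable_prod (R : numFieldType) (V : normedModType R)
    (I : Type) (r : seq I) (P : pred I) (F : I -> V -> R) (x : V) :
  (forall i, P i -> differentiable (F i) x) ->
  differentiable (fun y => \prod_(i <- r | P i) F i y) x.
Proof.
move=> dF; rewrite -fct_prodE; elim/big_ind: _ => //.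
by move=> f h df dh; apply: differentiableM.
Qed.

Lemma differentiable_det (R : numFieldType) (V : normedModType R) (m : nat)
    (M : V -> 'M[R]_m) (x : V) :
  (forall i j, differentiable (fun y => M y i j) x) ->
  differentiable (fun y => \det (M y)) x.
Proof.
move=> dM; apply: differentiable_big => s _.
apply: differentiableM; first exact: differentiable_cst.
by apply: differentiable_prod => i _; apply: dM.
Qed.

Lemma is_derive_big (R : numFieldType) (V W : normedModType R)
    (I : eqType) (r : seq I) (F : I -> V -> W) (dF : I -> W) (x v : V) :
  (forall i, i \in r -> is_derive x v (F i) (dF i)) ->
  is_derive x v (fun y => \sum_(i <- r) F i y) (\sum_(i <- r) dF i).
Proof.
elim: r => [|i r IHr] dFr.
  by rewrite big_nil; under eq_fun do rewrite big_nil; exact: is_derive_cst.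
rewrite big_cons; under eq_fun do rewrite big_cons.
apply: is_deriveD; first by apply: dFr; rewrite mem_head.
by apply: IHr => j jr; apply: dFr; rewrite in_cons jr orbT.
Qed.

Lemma is_derive_exprn (R : numFieldType) (m : nat) (t : R) :
  is_derive t 1 (fun s => s ^+ m) (m%:R * t ^+ m.-1).
Proof.
apply: is_derive_eq; first exact: derivableP (@exprn_derivable R m t 1).
by rewrite exp_derive [_ *: 1]mulr1.
Qed.

Lemma is_derive_expR_scale (R : realType) (lam t : R) :
  is_derive t 1 (fun s => expR (lam * s)) (expR (lam * t) * lam).
Proof.
have dlam : is_derive t 1 (fun s => lam * s) lam.
  apply: is_derive_eq (is_deriveZ lam (is_derive_id t 1)) _.
  by rewrite /GRing.scale /= mulr1.
exact: is_derive1_comp (is_derive_expR (lam * t)) dlam.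
Qed.

Lemma sum3_rotate (V : nmodType) (n : nat) (F : 'I_n -> 'I_n -> 'I_n -> V) :
  \sum_a \sum_b \sum_c F c a b = \sum_a \sum_b \sum_c F a b c.
Proof. by under eq_bigr do rewrite exchange_big; rewrite exchange_big. Qed.

Section CubicForm.
Variables (R : comRingType) (n : nat) (v : 'I_n -> R).
Implicit Types (T : 'I_n -> 'I_n -> 'I_n -> R).

Definition cubic T := \sum_a \sum_b \sum_c T a b c * v a * v b * v c.

Lemma eq_cubic T1 T2 : (forall a b c, T1 a b c = T2 a b c) -> cubic T1 = cubic T2.
Proof.
move=> eT; apply: eq_bigr => a _; apply: eq_bigr => b _.
by apply: eq_bigr => c _; rewrite eT.
Qed.

Lemma cubicD T1 T2 :
  cubic (fun a b c => T1 a b c + T2 a b c) = cubic T1 + cubic T2.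
Proof.
rewrite /cubic -big_split; apply: eq_bigr => a _ /=.
rewrite -big_split; apply: eq_bigr => b _ /=.
by rewrite -big_split; apply: eq_bigr => c _ /=; ring.
Qed.

Lemma cubicZ k T : cubic (fun a b c => k * T a b c) = k * cubic T.
Proof.
rewrite /cubic mulr_sumr; apply: eq_bigr => a _; rewrite mulr_sumr.
by apply: eq_bigr => b _; rewrite mulr_sumr; apply: eq_bigr => c _; ring.
Qed.

Lemma cubic_swap12 T : cubic (fun a b c => T b a c) = cubic T.
Proof.
rewrite /cubic exchange_big; apply: eq_bigr => a _; apply: eq_bigr => b _.
by apply: eq_bigr => c _; ring.
Qed.

Lemma cubic_swap23 T : cubic (fun a b c => T a c b) = cubic T.
Proof.
rewrite /cubic; apply: eq_bigr => a _; rewrite exchange_big.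
by apply: eq_bigr => b _; apply: eq_bigr => c _; ring.
Qed.

Lemma cubic_rotate T : cubic (fun a b c => T c a b) = cubic T.
Proof. by rewrite (cubic_swap23 (fun a b c => T b a c)) cubic_swap12. Qed.

Lemma cubic_swap13 T : cubic (fun a b c => T c b a) = cubic T.
Proof. by rewrite (cubic_swap12 (fun a b c => T c a b)) cubic_rotate. Qed.

Lemma cubicN T : cubic (fun a b c => - T a b c) = - cubic T.
Proof.
rewrite /cubic -sumrN; apply: eq_bigr => a _; rewrite -sumrN.
by apply: eq_bigr => b _; rewrite -sumrN; apply: eq_bigr => c _; ring.
Qed.

Lemma cubicB T1 T2 :
  cubic (fun a b c => T1 a b c - T2 a b c) = cubic T1 - cubic T2.
Proof. by rewrite cubicD cubicN. Qed.

Lemma cubic_symmetrize T :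
  cubic (fun a b c => T a b c + T a c b + T b a c + T b c a + T c a b + T c b a)
  = 6%:R * cubic T.
Proof.
have e3 : cubic (fun a b c => T b c a) = cubic T :=
  etrans (cubic_swap12 (fun a b c => T a c b)) (cubic_swap23 T).
rewrite !cubicD (cubic_swap23 T) (cubic_swap12 T) e3 (cubic_rotate T) (cubic_swap13 T).
ring.
Qed.

Lemma contract_connection (L : 'I_n -> R) (G : 'I_n -> 'I_n -> 'I_n -> R) :
  \sum_a L a * (\sum_b \sum_c G a b c * v b * v c)
  = \sum_a \sum_b (\sum_c G c a b * L c) * v a * v b.
Proof.
under eq_bigr => a _ do (rewrite mulr_sumr; under eq_bigr => b _ do rewrite mulr_sumr).
under [RHS]eq_bigr => a _ do under eq_bigr => b _ do rewrite !mulr_suml.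
rewrite (sum3_rotate (fun a b c => G a b c * L a * v b * v c)).
by apply: eq_bigr => a _; apply: eq_bigr => b _; apply: eq_bigr => c _; ring.
Qed.

Lemma contract_connection_cubic (U : 'I_n -> 'I_n -> R) (G : 'I_n -> 'I_n -> 'I_n -> R) :
  \sum_a (\sum_e U a e * v e) * (\sum_b \sum_c G a b c * v b * v c)
  = cubic (fun a b c => \sum_d G d a b * U d c).
Proof.
rewrite contract_connection; apply: eq_bigr => a _; apply: eq_bigr => b _.
under eq_bigr do rewrite mulr_sumr.
rewrite exchange_big !mulr_suml; apply: eq_bigr => c _.
by rewrite !mulr_suml; apply: eq_bigr => d _; ring.
Qed.

Variable G : 'I_n -> 'I_n -> 'I_n -> R.
Variable w : 'I_n -> R.
Hypothesis w_geodesic : forall a, w a = - \sum_b \sum_c G a b c * v b * v c.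

Lemma linear_form_product_rule (L : 'I_n -> R) (P : 'I_n -> 'I_n -> R) :
  \sum_a (L a * w a + v a * \sum_b P a b * v b)
  = \sum_a \sum_b (P a b - \sum_c G c a b * L c) * v a * v b.
Proof.
under eq_bigr do rewrite w_geodesic mulrN.
rewrite big_split /= sumrN contract_connection addrC.
under [RHS]eq_bigr do (under eq_bigr do rewrite !mulrBl; rewrite sumrB).
rewrite sumrB; congr (_ - _).
by apply: eq_bigr => a _; rewrite mulr_sumr; apply: eq_bigr => b _; ring.
Qed.

Lemma quadratic_form_product_rule (U : 'I_n -> 'I_n -> R) (P : 'I_n -> 'I_n -> 'I_n -> R) :
  \sum_a \sum_b (U a b * v a * w b + v b * (U a b * w a + v a * \sum_c P a b c * v c))
  = cubic (fun a b c => P a b c - \sum_d G d c a * U d b - \sum_d G d c b * U a d).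
Proof.
have eP : \sum_a \sum_b v b * (v a * \sum_c P a b c * v c) = cubic P.
  apply: eq_bigr => a _; apply: eq_bigr => b _.
  by rewrite !mulr_sumr; apply: eq_bigr => c _; ring.
have eUa : \sum_a \sum_b v b * (U a b * w a)
           = - cubic (fun a b c => \sum_d G d c a * U d b).
  rewrite (cubic_rotate (fun a b c => \sum_d G d a b * U d c)).
  rewrite -contract_connection_cubic -sumrN; apply: eq_bigr => a _.
  by rewrite w_geodesic -mulrN mulr_suml; apply: eq_bigr => b _; ring.
have eUb : \sum_a \sum_b U a b * v a * w b
           = - cubic (fun a b c => \sum_d G d c b * U a d).
  rewrite (cubic_swap13 (fun a b c => \sum_d G d a b * U c d)).
  rewrite -contract_connection_cubic -sumrN exchange_big; apply: eq_bigr => b _.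
  by rewrite w_geodesic -mulrN mulr_suml; apply: eq_bigr => a _; ring.
rewrite !cubicB -eP -eUa -eUb.
under eq_bigr do (under eq_bigr do rewrite mulrDr addrA; rewrite !big_split).
by rewrite !big_split /=; ring.
Qed.

End CubicForm.

Lemma telescope_sumr_trunc (V : zmodType) (m : nat) (f : nat -> V) :
  \sum_(0 <= k < m) (f k - (if (k.+1 < m)%N then f k.+1 else 0))
  = if (0 < m)%N then f 0 else 0.
Proof.
case: m => [|m]; first by rewrite big_geq.
rewrite (@telescope_sumr_eq _ 0 m.+1 (fun k => - (if (k < m.+1)%N then f k else 0))) //=.
  by rewrite ltnn oppr0 add0r opprK.
by move=> k km; rewrite km opprK addrC.
Qed.

Section Smoothness.
Variables (R : realType) (n : nat) (D : set 'rV[R]_n).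
Implicit Types (f : 'rV[R]_n -> R) (q : 'rV[R]_n).

Lemma smoothOn_differentiable f q : smoothOn D f -> D q -> differentiable f q.
Proof. by move=> sf Dq; exact: (sf 1%N).1. Qed.

Lemma smoothOn_partial f i : smoothOn D f -> smoothOn D (partial f i).
Proof. by move=> sf k; exact: (sf k.+1).2. Qed.

Variable g : 'I_n -> 'I_n -> 'rV[R]_n -> R.
Hypothesis mg : metricOn D g.

(* [invmx] agrees with adj/det only where the determinant is nonzero, which holds near
   [q] because [D] is open. *)
Lemma differentiable_ginv q i j : D q -> differentiable (fun y => ginv g y i j) q.
Proof.
move: mg => [oD [_ [det_g sg]]] Dq.
have dg a b : differentiable (g a b) q by exact: smoothOn_differentiable (sg a b) Dq.
have ddet : differentiable (fun y => \det (gmx g y)) q.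
  by apply: differentiable_det => a b; under eq_fun do rewrite mxE.
apply: (@near_eq_differentiable _ _ _ _
          (fun y => (\det (gmx g y))^-1 * \adj (gmx g y) i j)).
  near=> y; rewrite /ginv /invmx unitmxE unitfE det_g ?mxE //.
  by near: y; exact: open_nbhs_nbhs.
apply: differentiableM; first exact: differentiableV ddet (det_g q Dq).
under eq_fun do rewrite mxE /cofactor.
apply: differentiableM; first exact: differentiable_cst.
by apply: differentiable_det => a b; under eq_fun do rewrite !mxE.
Unshelve. all: by end_near. Qed.
Lemma differentiable_Gamma a b c q : D q -> differentiable (Gamma g a b c) q.
Proof.
move=> Dq; have [_ [_ [_ sg]]] := mg.
have dpg d e k : differentiable (partial (g d e) k) q.
  exact: smoothOn_differentiable (smoothOn_partial _ (sg d e)) Dq.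
apply: differentiableM; first exact: differentiable_cst.
apply: differentiable_big => d _; apply: differentiableM.
  exact: differentiable_ginv.
by apply: differentiableB; first apply: differentiableD.
Qed.

Lemma differentiable_symD (L : 'I_n -> 'rV[R]_n -> R) a b q :
  (forall a, smoothOn D (L a)) -> D q -> differentiable (symD g L a b) q.
Proof.
move=> sL Dq.
have dcovD1 a' b' : differentiable (covD1 g L a' b') q.
  apply: differentiableB.
    exact: smoothOn_differentiable (smoothOn_partial _ (sL a')) Dq.
  apply: differentiable_big => c _; apply: differentiableM.
    exact: differentiable_Gamma.
  exact: smoothOn_differentiable (sL c) Dq.
apply: differentiableM; first exact: differentiable_cst.
exact: differentiableD.
Qed.
End Smoothness.

Lemma quadv_symD (R : realType) (n : nat) (g : 'I_n -> 'I_n -> 'rV[R]_n -> R)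
    (L : 'I_n -> 'rV[R]_n -> R) (q w : 'rV[R]_n) :
  quadv (symD g L) q w = \sum_a \sum_b covD1 g L a b q * w 0 a * w 0 b.
Proof.
have swap : \sum_a \sum_b covD1 g L b a q * w 0 a * w 0 b
            = \sum_a \sum_b covD1 g L a b q * w 0 a * w 0 b.
  by rewrite exchange_big; apply: eq_bigr => a _; apply: eq_bigr => b _ /=; ring.
transitivity (2^-1 * (\sum_a \sum_b covD1 g L a b q * w 0 a * w 0 b
                     + \sum_a \sum_b covD1 g L b a q * w 0 a * w 0 b)).
  rewrite -big_split mulr_sumr; apply: eq_bigr => a _ /=.
  by rewrite -big_split mulr_sumr; apply: eq_bigr => b _ /=; rewrite /symD; ring.
by rewrite swap; field.
Qed.

Lemma linvZ (R : realType) (n : nat) (c : R) (L : 'I_n -> 'rV[R]_n -> R) (q w : 'rV[R]_n) :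
  linv (fun a q => c * L a q) q w = c * linv L q w.
Proof. by rewrite /linv mulr_sumr; apply: eq_bigr => a _; rewrite mulrA. Qed.

Lemma cubic_sym3 (R : realType) (n : nat) (v : 'I_n -> R)
    (T : 'I_n -> 'I_n -> 'I_n -> 'rV[R]_n -> R) (q : 'rV[R]_n) :
  cubic v (fun a b c => sym3 T a b c q) = cubic v (fun a b c => T a b c q).
Proof. by rewrite /sym3 cubicZ cubic_symmetrize mulKf ?pnatr_eq0. Qed.

Lemma cubic_covD2_CKT (R : realType) (n : nat) (D : set 'rV[R]_n)
    (g U : 'I_n -> 'I_n -> 'rV[R]_n -> R) (u : 'I_n -> 'rV[R]_n -> R) (q w : 'rV[R]_n) :
  CKT D g U u -> D q ->
  cubic (w 0) (fun a b c => covD2 g U a b c q) = linv u q w * quadv g q w.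
Proof.
move=> [_ cktU] Dq; rewrite -cubic_sym3.
rewrite (eq_cubic _ (fun a b c => cktU a b c q Dq)) cubic_sym3.
rewrite /cubic /linv mulr_suml; apply: eq_bigr => a _.
rewrite mulr_sumr; apply: eq_bigr => b _.
by rewrite mulr_sumr; apply: eq_bigr => c _; ring.
Qed.

Lemma is_derive_along_curve (R : realType) (n : nat) (x : R -> 'rV[R]_n) (t : R)
    (f : 'rV[R]_n -> R) :
  derivable x t 1 -> differentiable f (x t) ->
  is_derive t 1 (fun s => f (x s)) (linv (partial f) (x t) (velocity x t)).
Proof.
move=> /derivable1_diffP dx df; apply: DeriveDef.
  by apply/derivable1_diffP; exact: differentiable_comp.
rewrite deriveE; last exact: differentiable_comp.
rewrite diff_comp //= -derive1E' // -/(velocity x t).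
rewrite {1}(row_sum_delta (velocity x t)) linear_sum; apply: eq_bigr => a _.
by rewrite linearZ /= /partial deriveE // mulrC.
Qed.

Lemma first_integral_of_is_derive (R : realType) (n : nat) (D : set 'rV[R]_n)
    (g : 'I_n -> 'I_n -> 'rV[R]_n -> R) (E0 : R) (I : R -> 'rV[R]_n -> 'rV[R]_n -> R) :
  (forall x t0 t1 t, constrained_geodesic D g E0 x t0 t1 -> t0 < t < t1 ->
     is_derive t 1 (fun s => I s (x s) (velocity x s)) 0) ->
  first_integral D g E0 I.
Proof.
move=> dI x t0 t1 Hx t Ht; have := dI x t0 t1 t Hx Ht.
by split; [exact: ex_derive | rewrite derive1E derive_val].
Qed.

(* The k-th summand of I_(l)2 is [power_term g (2 k) (L (2 k))]; after [I1E] the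
   summands of I_(l)1 are [power_term g (2 k).+1 (L (2 k).+1)]. *)
Definition power_term (R : realType) (n : nat) (g : 'I_n -> 'I_n -> 'rV[R]_n -> R)
    (j : nat) (L : 'I_n -> 'rV[R]_n -> R) (t : R) (q w : 'rV[R]_n) : R :=
  - (t ^+ j.+1 / j.+1%:R) * quadv (symD g L) q w + t ^+ j * linv L q w.

Lemma I1E (R : realType) (n : nat) (g : 'I_n -> 'I_n -> 'rV[R]_n -> R) (l : nat)
    (L : nat -> 'I_n -> 'rV[R]_n -> R) (C0 : 'I_n -> 'I_n -> 'rV[R]_n -> R)
    (G : 'rV[R]_n -> R) (t : R) (q w : 'rV[R]_n) :
  I1 g l L C0 G t q w =
  \sum_(0 <= k < l) power_term g (2 * k).+1 (L (2 * k).+1) t q w + quadv C0 q w + G q.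
Proof.
have eL : \sum_(1 <= k < l.+1) t ^+ (2 * k).-1 * linv (L (2 * k).-1) q w
          = \sum_(0 <= k < l) t ^+ (2 * k).+1 * linv (L (2 * k).+1) q w.
  by rewrite big_add1; apply: eq_bigr => k _; rewrite mulnS add2n.
have eQ : \sum_a \sum_b
    (- (\sum_(1 <= k < l.+1) t ^+ (2 * k) / (2 * k)%:R * symD g (L (2 * k).-1) a b q)
     + C0 a b q) * w 0 a * w 0 b
  = \sum_(0 <= k < l) - (t ^+ (2 * k).+2 / (2 * k).+2%:R)
                        * quadv (symD g (L (2 * k).+1)) q w + quadv C0 q w.
  under eq_bigr do under eq_bigr do rewrite !mulrDl.
  under eq_bigr do rewrite big_split; rewrite big_split /=; congr (_ + _).
  under [RHS]eq_bigr do rewrite mulr_sumr; rewrite [RHS]exchange_big; apply: eq_bigr => a _.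
  under [RHS]eq_bigr do rewrite mulr_sumr; rewrite [RHS]exchange_big; apply: eq_bigr => b _.
  rewrite big_add1 -sumrN !mulr_suml; apply: eq_bigr => k _.
  by rewrite mulnS add2n /=; ring.
by rewrite /I1 /power_term eQ eL big_split /=; ring.
Qed.

Section Geodesic.
Variables (R : realType) (n : nat) (D : set 'rV[R]_n)
  (g : 'I_n -> 'I_n -> 'rV[R]_n -> R) (E0 : R) (x : R -> 'rV[R]_n) (t0 t1 t : R).
Hypothesis mg : metricOn D g.
Hypothesis E0_neq0 : E0 != 0.
Hypothesis x_geodesic : constrained_geodesic D g E0 x t0 t1.
Hypothesis t_in : t0 < t < t1.

Lemma is_derive_velocity a :
  is_derive t 1 (fun s => velocity x s 0 a) (derive1 (velocity x) t 0 a).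
Proof.
have [_ _ dv _ _] := x_geodesic t_in.
apply: DeriveDef; first by move/derivable_mxP: dv => /(_ 0 a).
by rewrite derive1E derive_mx // mxE.
Qed.

Lemma acceleration_geodesic a :
  derive1 (velocity x) t 0 a =
  - \sum_b \sum_c Gamma g a b c (x t) * velocity x t 0 b * velocity x t 0 c.
Proof. by have [_ _ _ geo _] := x_geodesic t_in; apply/eqP; rewrite -addr_eq0 geo. Qed.

Lemma is_derive_linv (L : 'I_n -> 'rV[R]_n -> R) : (forall a, differentiable (L a) (x t)) ->
  is_derive t 1 (fun s => linv L (x s) (velocity x s))
    (quadv (symD g L) (x t) (velocity x t)).
Proof.
have [_ dx _ _ _] := x_geodesic t_in.
move=> dL; apply: is_derive_eq.
  apply: is_derive_big => a _.
  exact: is_deriveM (is_derive_along_curve dx (dL a)) (is_derive_velocity a).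
rewrite /GRing.scale /=.
by rewrite (linear_form_product_rule (w := fun a => derive1 (velocity x) t 0 a)
  acceleration_geodesic) quadv_symD.
Qed.

Lemma is_derive_quadv (U : 'I_n -> 'I_n -> 'rV[R]_n -> R) :
  (forall a b, differentiable (U a b) (x t)) ->
  is_derive t 1 (fun s => quadv U (x s) (velocity x s))
    (cubic (velocity x t 0) (fun a b c => covD2 g U a b c (x t))).
Proof.
have [_ dx _ _ _] := x_geodesic t_in.
move=> dU; apply: is_derive_eq.
  apply: is_derive_big => a _; apply: is_derive_big => b _.
  exact: is_deriveM (is_deriveM (is_derive_along_curve dx (dU a b))
    (is_derive_velocity a)) (is_derive_velocity b).
rewrite /GRing.scale /=.
exact: (quadratic_form_product_rule (w := fun a => derive1 (velocity x) t 0 a)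
  acceleration_geodesic).
Qed.

Lemma is_derive_quadv_CKT (U : 'I_n -> 'I_n -> 'rV[R]_n -> R) (u : 'I_n -> 'rV[R]_n -> R) :
  (forall a b, differentiable (U a b) (x t)) -> CKT D g U u ->
  is_derive t 1 (fun s => quadv U (x s) (velocity x s))
    (2 * E0 * linv u (x t) (velocity x t)).
Proof.
have [Dxt _ _ _ energy] := x_geodesic t_in.
move=> dU cktU; apply: is_derive_eq; first exact: is_derive_quadv.
by rewrite (cubic_covD2_CKT _ cktU Dxt) [quadv _ _ _]energy mulrC.
Qed.

Lemma is_derive_power_term j (L Y : 'I_n -> 'rV[R]_n -> R) :
  (forall a, smoothOn D (L a)) -> CKT D g (symD g L) Y ->
  is_derive t 1 (fun s => power_term g j L s (x s) (velocity x s))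
    (j%:R * t ^+ j.-1 * linv L (x t) (velocity x t)
     - 2 * E0 * (t ^+ j.+1 / j.+1%:R) * linv Y (x t) (velocity x t)).
Proof.
have [Dxt _ _ _ _] := x_geodesic t_in.
move=> sL cktY.
have dQ := is_derive_quadv_CKT (fun a b => differentiable_symD mg a b sL Dxt) cktY.
have dlin := is_derive_linv (fun a => smoothOn_differentiable (sL a) Dxt).
have dcoef := is_deriveN (is_deriveM (is_derive_exprn j.+1 t)
  (is_derive_cst (j.+1%:R^-1 : R) t 1)).
apply: (is_derive_eq (is_deriveD (is_deriveM dcoef dQ)
  (is_deriveM (is_derive_exprn j t) dlin))).
rewrite !fctE /= !scaler0 !add0r /GRing.scale /= mulKf ?pnatr_eq0 //; ring.
Qed.

Lemma is_derive_power_term_KT j (L : 'I_n -> 'rV[R]_n -> R) :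
  (forall a, smoothOn D (L a)) -> KT D g (symD g L) ->
  is_derive t 1 (fun s => power_term g j L s (x s) (velocity x s))
    (j%:R * t ^+ j.-1 * linv L (x t) (velocity x t)).
Proof.
move=> sL ktL; apply: is_derive_eq (is_derive_power_term j sL ktL) _.
have -> : linv (fun _ _ => 0) (x t) (velocity x t) = 0.
  by rewrite /linv big1 // => a _; rewrite mul0r.
by rewrite mulr0 subr0.
Qed.

Lemma is_derive_power_term_CKT j (c : nat) (L : nat -> 'I_n -> 'rV[R]_n -> R) :
  (2 * c = j.+1 * j.+2)%N ->
  (forall a, smoothOn D (L j a)) ->
  CKT D g (symD g (L j)) (fun a q => c%:R / E0 * L j.+2 a q) ->
  is_derive t 1 (fun s => power_term g j (L j) s (x s) (velocity x s))
    (j%:R * t ^+ j.-1 * linv (L j) (x t) (velocity x t)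
     - j.+2%:R * t ^+ j.+1 * linv (L j.+2) (x t) (velocity x t)).
Proof.
move=> hc sL cktL; apply: is_derive_eq (is_derive_power_term j sL cktL) _.
have -> : (c%:R : R) = (j.+1 * j.+2)%:R / 2 by rewrite -hc natrM mulrC mulKf ?pnatr_eq0.
rewrite linvZ natrM; field.
by rewrite E0_neq0 nat1r pnatr_eq0.
Qed.
End Geodesic.

Section Integrals.
Variables (R : realType) (n : nat) (D : set 'rV[R]_n)
  (g : 'I_n -> 'I_n -> 'rV[R]_n -> R) (E0 : R).
Hypothesis mg : metricOn D g.
Hypothesis E0_neq0 : E0 != 0.

Lemma Iexp_first_integral (lam : R) (L : 'I_n -> 'rV[R]_n -> R) :
  (forall a, smoothOn D (L a)) ->
  CKT D g (symD g L) (fun a q => lam ^+ 2 / (2 * E0) * L a q) ->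
  first_integral D g E0 (Iexp g lam L).
Proof.
move=> sL cktL; apply: first_integral_of_is_derive => x t0 t1 t Hx Ht.
have [Dxt _ _ _ _] := Hx t Ht.
have dQ := is_derive_quadv_CKT Hx Ht (fun a b => differentiable_symD mg a b sL Dxt) cktL.
have dlin := is_derive_linv Hx Ht (fun a => smoothOn_differentiable (sL a) Dxt).
apply: (is_derive_eq (is_deriveM (is_derive_expR_scale lam t)
  (is_deriveD (is_deriveN dQ) (is_deriveM (is_derive_cst lam t 1) dlin)))).
rewrite !fctE /GRing.scale /= linvZ; field.
by rewrite E0_neq0.
Qed.

Lemma I2_first_integral (l : nat) (L : nat -> 'I_n -> 'rV[R]_n -> R) :
  (forall k a, (k <= l)%N -> smoothOn D (L (2 * k)%N a)) ->
  KT D g (symD g (L (2 * l)%N)) ->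
  (forall k, (k < l)%N ->
     CKT D g (symD g (L (2 * k)%N))
         (fun a q => (k.+1 * (2 * k).+1)%:R / E0 * L (2 * k).+2 a q)) ->
  first_integral D g E0 (I2 g l L).
Proof.
move=> sL ktL cktL; apply: first_integral_of_is_derive => x t0 t1 t Hx Ht.
pose beta k := (2 * k)%:R * t ^+ (2 * k).-1 * linv (L (2 * k)%N) (x t) (velocity x t).
apply: is_derive_eq.
  apply: (@is_derive_big _ _ _ _ _
    (fun k s => power_term g (2 * k) (L (2 * k)%N) s (x s) (velocity x s))
    (fun k => beta k - (if (k.+1 < l.+1)%N then beta k.+1 else 0))) => k.
  rewrite mem_index_iota ltnS => /= kl.
  case: ltnP => [k_lt_l | l_le_k].
    have -> : beta k.+1 =
        (2 * k).+2%:R * t ^+ (2 * k).+1 * linv (L (2 * k).+2) (x t) (velocity x t).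
      by rewrite /beta mulnS add2n.
    apply: (is_derive_power_term_CKT mg E0_neq0 Hx Ht _ (fun a => sL k a kl)
                                      (cktL k k_lt_l)).
    lia.
  have -> : k = l by apply/eqP; rewrite eqn_leq kl.
  rewrite subr0.
  exact: (is_derive_power_term_KT mg Hx Ht _ (fun a => sL l a (leqnn l)) ktL).
by rewrite telescope_sumr_trunc /beta mul0r mul0r.
Qed.

Lemma I1_first_integral (l : nat) (L : nat -> 'I_n -> 'rV[R]_n -> R)
    (C0 : 'I_n -> 'I_n -> 'rV[R]_n -> R) (X0 : 'I_n -> 'rV[R]_n -> R)
    (G : 'rV[R]_n -> R) :
  (forall k a, (1 <= k <= l)%N -> smoothOn D (L (2 * k).-1 a)) ->
  (forall a b, smoothOn D (C0 a b)) ->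
  smoothOn D G ->
  ((1 <= l)%N -> KT D g (symD g (L (2 * l).-1))) ->
  CKT D g C0 X0 ->
  (forall k, (1 <= k < l)%N ->
     CKT D g (symD g (L (2 * k).-1))
         (fun a q => (k * (2 * k).+1)%:R / E0 * L (2 * k).+1 a q)) ->
  (forall a q, D q ->
     partial G a q = - (2 * E0) * X0 a q - (if (0 < l)%N then L 1%N a q else 0)) ->
  first_integral D g E0 (I1 g l L C0 G).
Proof.
move=> sL sC sG ktL cktC cktL dG.
apply: first_integral_of_is_derive => x t0 t1 t Hx Ht.
have [Dxt dx _ _ _] := Hx t Ht.
pose beta k := (2 * k).+1%:R * t ^+ (2 * k) * linv (L (2 * k).+1) (x t) (velocity x t).
have dpow : is_derive t 1
    (fun s => \sum_(0 <= k < l)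
                power_term g (2 * k).+1 (L (2 * k).+1) s (x s) (velocity x s))
    (\sum_(0 <= k < l) (beta k - (if (k.+1 < l)%N then beta k.+1 else 0))).
  apply: is_derive_big => k; rewrite mem_index_iota => /= kl.
  have sLk a : smoothOn D (L (2 * k).+1 a).
    by have := sL k.+1 a; rewrite mulnS add2n; apply; rewrite ltnS.
  case: ltnP => [k1_lt_l | l_le_k1].
    have -> : beta k.+1 =
        (2 * k).+3%:R * t ^+ (2 * k).+2 * linv (L (2 * k).+3) (x t) (velocity x t).
      by rewrite /beta mulnS add2n.
    have := cktL k.+1; rewrite mulnS add2n /= => /(_ k1_lt_l) cktLk.
    by apply: (is_derive_power_term_CKT mg E0_neq0 Hx Ht _ sLk cktLk); lia.
  have lk : l = k.+1 by apply/eqP; rewrite eqn_leq kl l_le_k1.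
  have := ktL; rewrite lk mulnS add2n /= => /(_ isT) ktLk.
  by rewrite subr0; exact: (is_derive_power_term_KT mg Hx Ht _ sLk ktLk).
have dC := is_derive_quadv_CKT Hx Ht (fun a b => smoothOn_differentiable (sC a b) Dxt) cktC.
have dGx := is_derive_along_curve dx (smoothOn_differentiable sG Dxt).
under eq_fun do rewrite I1E.
apply: is_derive_eq (is_deriveD (is_deriveD dpow dC) dGx) _.
rewrite telescope_sumr_trunc /beta /linv muln0 expr0 mulr1 mul1r.
under [X in _ + X]eq_bigr => a _ do rewrite dG // mulrBl -mulrA.
rewrite sumrB -mulr_sumr.
case: (0 < l)%N; first by ring.
by under [X in _ - X]eq_bigr do rewrite mul0r; rewrite big1_eq; ring.
Qed.


End Integrals.

Theorem proposition2 (R : realType) (n : nat) (D : set 'rV[R]_n)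
    (g : 'I_n -> 'I_n -> 'rV[R]_n -> R) (E0 : R) :
  metricOn D g -> E0 != 0 ->
  (* Integral 1 *)
  (forall (l : nat) (L : nat -> 'I_n -> 'rV[R]_n -> R)
          (C0 : 'I_n -> 'I_n -> 'rV[R]_n -> R) (X0 : 'I_n -> 'rV[R]_n -> R)
          (G : 'rV[R]_n -> R),
     (forall k a, (1 <= k <= l)%N -> smoothOn D (L (2 * k).-1 a)) ->
     (forall a b, smoothOn D (C0 a b)) ->
     smoothOn D G ->
     ((1 <= l)%N -> KT D g (symD g (L (2 * l).-1))) ->
     CKT D g C0 X0 ->
     (forall k, (1 <= k < l)%N ->
        CKT D g (symD g (L (2 * k).-1))
            (fun a q => (k * (2 * k).+1)%:R / E0 * L (2 * k).+1 a q)) ->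
     (forall a q, D q ->
        partial G a q = - (2 * E0) * X0 a q - (if (0 < l)%N then L 1%N a q else 0)) ->
     first_integral D g E0 (I1 g l L C0 G)) /\
  (* Integral 2 *)
  (forall (l : nat) (L : nat -> 'I_n -> 'rV[R]_n -> R),
     (forall k a, (k <= l)%N -> smoothOn D (L (2 * k)%N a)) ->
     KT D g (symD g (L (2 * l)%N)) ->
     (forall k, (k < l)%N ->
        CKT D g (symD g (L (2 * k)%N))
            (fun a q => (k.+1 * (2 * k).+1)%:R / E0 * L (2 * k).+2 a q)) ->
     first_integral D g E0 (I2 g l L)) /\
  (* Integral 3 *)
  (forall (lam : R) (L : 'I_n -> 'rV[R]_n -> R),
     lam != 0 ->
     (forall a, smoothOn D (L a)) ->
     CKT D g (symD g L) (fun a q => lam ^+ 2 / (2 * E0) * L a q) ->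
     first_integral D g E0 (Iexp g lam L)).
Proof.
move=> mg E0_neq0; split; [|split].
- exact: I1_first_integral.
- exact: I2_first_integral.
-
  by move=> lam L _; exact: Iexp_first_integral.
Qed.
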